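(* Assume $E$ is countable, let $\gamma$ be a POS and $\alpha$ a dust-rate matrix for $\gamma$. Let $y\in S$, $x\in S\setminus y_+$, and let $f$ be a bounded $\mathcal F_{S\setminus y_+}$-measurable function. Then $\delta_x(\gamma_y f)=0$ if $x=y$; $\delta_x(\gamma_y f)\le\delta_x(f)$ if $x\in\{y\}^*$; and $\delta_x(\gamma_y f)\le\delta_x(f)+\delta_y(f)\,\alpha_{y,x}$ if $x<y$.
   Context: $(S,\le)$ is a countable partially ordered set. For $x\in S$ write $x_-=\{y\in S:y<x\}$, $x_+=\{y\in S:y>x\}$. For $\Upsilon\subset S$: $\max(\Upsilon)=\{x\in\Upsilon: y\notin\Upsilon\text{ for all }y>x\}$, $\min(\Upsilon)=\{x\in\Upsilon: y\notin\Upsilon\text{ for all }y<x\}$, the past $\Upsilon_-=\{x\in S\setminus\Upsilon:\exists y\in\Upsilon,\ x<y\}$, the future $\Upsilon_+=\{x\in S\setminus\Upsilon:\exists y\in\Upsilon,\ x>y\}$, and the outer time $\Upsilon^*=\{x\in S: x\text{ is comparable with no }y\in\Upsilon\}$. Standing assumptions: for every $x\in S$, $\max(x_-)$ and $\min(x_+)$ are finite, every $y<x$ satisfies $y\le y_0<x$ for some $y_0\in\max(x_-)$, every $z>x$ satisfies $z\ge z_0>x$ for some $z_0\in\min(x_+)$; and $S$ has no minimal element. A finite set $\Lambda\subset S$ is a time box if $\Lambda_-\cap\Lambda_+=\emptyset$. $\Omega=E^S$ with product $\sigma$-algebra $\mathcal F$; $\mathcal F_\Upsilon$ is generated by coordinates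 in $\Upsilon$. A proper oriented kernel on a time box $\Lambda$ is a map $\gamma_\Lambda:\mathcal F_{S\setminus\Lambda_+}\times\Omega\to[0,1]$ such that (a) $\gamma_\Lambda(\cdot,\omega)$ is a probability measure; (b) $\gamma_\Lambda(A,\cdot)$ is $\mathcal F_{\Lambda_-\cup\Lambda^*}$-measurable for $A\in\mathcal F_{S\setminus\Lambda_+}$; (c) $\gamma_\Lambda(A,\cdot)$ is $\mathcal F_{\Lambda_-}$-measurable for $A\in\mathcal F_\Lambda$; (d) $\gamma_\Lambda(B,\omega)=\mathbf 1_B(\omega)$ for $B\in\mathcal F_{\Lambda_-\cup\Lambda^*}$. A POS is a family $\gamma=(\gamma_\Lambda)$ of proper oriented kernels indexed by all time boxes with $\gamma_\Delta\gamma_\Lambda=\gamma_\Delta$ on $\mathcal F_{S\setminus\Lambda_+}$ whenever $\Lambda\subset\Delta$ (composition $(\gamma_\Delta\gamma_\Lambda)(f\mid\omega)=\int\gamma_\Lambda(f\mid\sigma)\gamma_\Delta(d\sigma,\omega)$). We write $\gamma_y=\gamma_{\{y\}}$ and $\gamma_y f(\omega)=\int f\,d\gamma_y(\cdot,\omega)$. For $\xi,\eta\in\Omega$ and $x\in S$, $\xi\overset{x}{=}\eta$ means $\xi_z=\eta_z$ for all $z\ne x$; $\delta_x(f)=\sup_{\xi\overset{x}{=}\eta}|f(\xi)-f(\eta)|$. A dust-rate matrix is a family $(\alpha_{y,x})_{x\le y}$ of nonnegative reals with $\alpha_{y,y}=0$ and $\delta_x(\gamma_y f)\le\delta_y(f)\,\alpha_{y,x}$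 for all $y\in S$, $x\in y_-$ and all bounded $\mathcal F_{\{y\}}$-measurable $f$. *)

From HB Require Import structures.
From mathcomp Require Import all_boot all_order all_algebra.
From mathcomp Require Import all_classical all_reals all_analysis.
From mathcomp Require Import measurable_realfun.
Set Implicit Arguments. Unset Strict Implicit. Unset Printing Implicit Defensive.
Import Order.TTheory GRing.Theory Num.Theory.
Local Open Scope classical_set_scope.
Local Open Scope ring_scope.

Section Poset.
Context {disp : Order.disp_t} {S : porderType disp}.

Definition lower (x : S) : set S := [set y | (y < x)%O].
Definition upper (x : S) : set S := [set y | (x < y)%O].
Definition maxs (U : set S) : set S := [set x | U x /\ forall y, (x < y)%O -> ~ U y].
Definition mins (U : set S) : set S := [set x | U x /\ forall y, (y < x)%O -> ~ U y].
Definition past (U : set S) : set S := [set x | ~ U x /\ exists2 y, U y & (x < y)%O].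
Definition future (U : set S) : set S := [set x | ~ U x /\ exists2 y, U y & (y < x)%O].
Definition outer (U : set S) : set S := [set x | forall y, U y -> ~~ (x >=< y)%O].

Definition standing_assumptions : Prop :=
  countable [set: S] /\
  (forall x, finite_set (maxs (lower x)) /\ finite_set (mins (upper x))) /\
  (forall x y, (y < x)%O -> exists2 y0, maxs (lower x) y0 & (y <= y0)%O) /\
  (forall x z, (x < z)%O -> exists2 z0, mins (upper x) z0 & (z0 <= z)%O) /\
  (forall x : S, exists y : S, (y < x)%O).

Definition timebox (L : set S) : Prop := finite_set L /\ past L `&` future L = set0.

End Poset.

Section Config.
Context {disp : Order.disp_t} {S : porderType disp} {E : pointedType}.

Definition cyl (U : set S) : set (set (S -> E)) :=
  [set A | exists z e, U z /\ A = [set w | w z = e]].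

(* Omega = E^S equipped with the sigma-algebra F_U *)
Definition FT (U : set S) := g_sigma_algebraType (cyl U).

Definition Fmeasurable (U : set S) (A : set (S -> E)) : Prop :=
  measurable (A : set (FT U)).

Definition agree_off (x : S) (xi eta : S -> E) : Prop := forall z, z != x -> xi z = eta z.

Definition osc {R : realType} (x : S) (f : (S -> E) -> R) : \bar R :=
  ereal_sup [set r | exists xi eta, agree_off x xi eta /\ r = (`|f xi - f eta|)%:E].

Definition bounded_cfg {R : realType} (f : (S -> E) -> R) : Prop :=
  exists M : R, forall w, `|f w| <= M.

(* a kernel family: gamma L w is the probability measure gamma_L(., w)
   on (Omega, F_{S \ L_+}) *)
Definition kernel_family (R : realType) :=
  forall L : set S, (S -> E) -> {measure set (FT (~` future L)) -> \bar R}.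

Definition proper_oriented_kernel {R : realType} (L : set S)
  (g : (S -> E) -> {measure set (FT (~` future L)) -> \bar R}) : Prop :=
  (forall w, g w setT = 1%E) /\
  (forall A : set (S -> E), Fmeasurable (~` future L) A ->
     measurable_fun [set: FT (past L `|` outer L)] (fun w : FT (past L `|` outer L) => (g w A : \bar R))) /\
  (* (c) *)
  (forall A : set (S -> E), Fmeasurable L A ->
     measurable_fun [set: FT (past L)] (fun w : FT (past L) => (g w A : \bar R))) /\
  (* (d) *)
  (forall B : set (S -> E), Fmeasurable (past L `|` outer L) B ->
     forall w, g w B = (\1_B w)%:E).

Definition kact {R : realType} (gamma : kernel_family R) (L : set S)
  (f : (S -> E) -> R) (w : S -> E) : R :=
  fine (\int[gamma L w]_s (f s)%:E).

Definition POS {R : realType} (gamma : kernel_family R) : Prop :=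
  (forall L, timebox L -> proper_oriented_kernel (gamma L)) /\
  (forall L D, timebox L -> timebox D -> L `<=` D ->
     forall A : set (S -> E),
       Fmeasurable (~` future L) A -> Fmeasurable (~` future D) A ->
       forall w, (\int[gamma D w]_s gamma L s A)%E = gamma D w A).

Definition dust_rate {R : realType} (gamma : kernel_family R) (alpha : S -> S -> R) : Prop :=
  (forall x y, (x <= y)%O -> 0 <= alpha y x) /\
  (forall y, alpha y y = 0) /\
  (forall y x, (x < y)%O ->
     forall f : (S -> E) -> R, bounded_cfg f ->
       measurable_fun [set: FT [set y]] (f : FT [set y] -> R) ->
       (osc x (kact gamma [set y] f) <= osc y f * (alpha y x)%:E)%E).

End Config.

From HB Require Import structures.
From mathcomp Require Import all_boot all_order all_algebra.
From mathcomp Require Import all_classical all_reals all_analysis.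
From mathcomp Require Import measurable_realfun.
Import Order.TTheory GRing.Theory Num.Theory.
Local Open Scope classical_set_scope.
Local Open Scope ring_scope.

(* Since gamma_y is proper, under gamma_y(., w) the configuration equals w off
   y_+ and {y} almost surely, so gamma_y f (w) integrates the one-site
   function e |-> f (w with w_y := e) against the law of the spin at y, and by
   (c) this law depends only on w restricted to y_-.  Changing w at x thus
   moves gamma_y f by at most delta_x(f) through the frozen coordinates, plus
   the change of the law of the spin at y, which vanishes unless x < y and is
   controlled by the dust rate when x < y. *)

Lemma countable_bigcup_measurable d (T : measurableType d) I (D : set I)
    (F : I -> set T) : countable [set: I] ->
  (forall i, D i -> measurable (F i)) -> measurable (\bigcup_(i in D) F i).
Proof.
move=> cI mF; rewrite bigcup_mkcond; apply: countable_bigcupT_measurable => // i.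
by case: ifPn => // /set_mem /mF.
Qed.

Lemma negligible_countable_bigcup d (T : measurableType d) (R : realType)
    (mu : {measure set T -> \bar R}) I (D : set I) (F : I -> set T) :
    countable [set: I] ->
  (forall i, D i -> mu.-negligible (F i)) -> mu.-negligible (\bigcup_(i in D) F i).
Proof.
rewrite bigcup_mkcond; elim/Ppointed: I => I in D F *.
  by move=> *; rewrite empty_eq0 bigcup0 //; exact: negligible_set0.
move=> /countable_bijP[B] /ppcard_eqP[g] nF.
rewrite (reindex_bigcup g^-1%FUN setT) //=; last exact: (@subl_surj _ _ B).
apply: negligible_bigcup => n; case: ifPn => [/set_mem/nF //|_].
exact: negligible_set0.
Qed.

Section set1_time.
Context {disp : Order.disp_t} {S : porderType disp}.
Implicit Types (y z : S).

Lemma timebox_set1 y : timebox [set y].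
Proof.
split; first exact: finite_set1.
apply/seteqP; split=> z // [[_ [a /= -> za]] [_ [b /= -> yb]]].
by have := lt_trans za yb; rewrite ltxx.
Qed.

Lemma set1_not_future y : ~ future [set y] y.
Proof. by move=> [/= ]. Qed.

Lemma not_future_set1 {y z} : ~ future [set y] z ->
  z = y \/ (past [set y] `|` outer [set y]) z.
Proof.
move=> nf; have [->|zy] := eqVneq z y; [by left | right].
have [zly|nzly] := boolP (z < y)%O.
  by left; split; [move=> /= /eqP; rewrite (negbTE zy) | exists y].
have [ylz|nylz] := boolP (y < z)%O.
  by exfalso; apply: nf; split; [move=> /= /eqP; rewrite (negbTE zy) | exists y].
right => y0 /= ->; apply/negP => /orP[]; rewrite le_eqVlt.
  by rewrite (negbTE zy) (negbTE nzly).
by rewrite eq_sym (negbTE zy) (negbTE nylz).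
Qed.

Lemma past_outer_not_future {y z} :
  (past [set y] `|` outer [set y]) z -> ~ future [set y] z.
Proof.
move=> Pz [_ [b /= -> yz]]; case: Pz => [[_ [a /= -> zy]]|Oz].
  by have := lt_trans zy yz; rewrite ltxx.
by have := Oz y erefl; rewrite comparable_sym (lt_comparable yz).
Qed.

End set1_time.

Section cylinder_sigma_algebra.
Context {disp : Order.disp_t} {S : porderType disp} {E : pointedType}.
Implicit Types (U V : set S) (w : S -> E).

Definition agree_on U w w' := forall z, U z -> w z = w' z.

Lemma measurable_agree_on {U} {A : set (S -> E)} {w w'} :
  measurable (A : set (FT U)) -> agree_on U w w' -> A w -> A w'.
Proof.
move=> mA; move: w w'.
suff : [set B : set (S -> E) | forall w w', agree_on U w w' -> (B w <-> B w')] A.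
  by move=> h w w' ww' Aw; have [+ _] := h w w' ww'; apply.
apply: (smallest_sub _ _ mA).
  split.
  - by move=> w w' _.
  - by move=> B HB w w' ww'; rewrite /setD /=; have := HB w w' ww'; tauto.
  - move=> B HB w w' ww'; split=> -[n _ Bn]; exists n => //.
      by have [+ _] := HB n w w' ww'; apply.
    by have [_ +] := HB n w w' ww'; apply.
by move=> B [z [e [Uz ->]]] w w' ww' /=; rewrite ww'.
Qed.

Lemma measurable_fun_agree_on {U d'} {T : measurableType d'} {g : FT U -> T} :
  (forall t : T, measurable [set t]) -> measurable_fun [set: FT U] g ->
  forall w w', agree_on U w w' -> g w = g w'.
Proof.
move=> mT mg w w' ww'.
have := mg measurableT [set g w] (mT _); rewrite setTI => mpre.
by have := measurable_agree_on mpre ww' erefl.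
Qed.

Lemma cylinder_measurable {U z} (e : E) : U z ->
  measurable ([set w : S -> E | w z = e] : set (FT U)).
Proof. by move=> Uz; apply: sub_sigma_algebra; exists z, e. Qed.

Lemma FT_measurableS {U V} {A : set (S -> E)} : U `<=` V ->
  measurable (A : set (FT U)) -> measurable (A : set (FT V)).
Proof.
move=> UV mA; apply: (smallest_sub _ _ mA); first exact: smallest_sigma_algebra.
by move=> B [z [e [Uz ->]]]; apply: cylinder_measurable; apply: UV.
Qed.

Lemma measurable_fun_coord {U y d'} {T : measurableType d'} (k : E -> T) :
  countable [set: E] -> U y -> measurable_fun [set: FT U] (fun w : FT U => k (w y)).
Proof.
move=> cE Uy _ Y mY; rewrite setTI.
have -> : (fun w : FT U => k (w y)) @^-1` Y =
    \bigcup_(e in [set e | Y (k e)]) [set w : S -> E | w y = e].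
  by apply/seteqP; split=> [w /= Yw|w [e /= Ye wy]]; [exists (w y)|rewrite /= wy].
by apply: countable_bigcup_measurable => // e _; exact: cylinder_measurable.
Qed.

End cylinder_sigma_algebra.

Section bounded_integral.
Context {d} {T : measurableType d} {R : realType} {mu : {measure set T -> \bar R}}.
Hypothesis mu1 : mu setT = 1%E.

Lemma integrable_bounded {u : T -> R} : measurable_fun setT u ->
  (exists M, forall t, `|u t| <= M) -> mu.-integrable setT (EFin \o u).
Proof.
move=> mu_ [M hM]; apply/integrableP; split; first exact/measurable_EFinP.
have M0 : (0 <= (`|M| : R)%:E)%E by rewrite lee_fin.
apply: (le_lt_trans (integral_le_bound (`|M|%:E) _ _ M0 _)) => //.
- exact/measurable_EFinP.
- by apply: aeW => t _ /=; rewrite lee_fin (le_trans (hM t)) // ler_norm.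
- by rewrite mu1 mule1 ltry.
Qed.

Lemma dist_fine_integral_le {u v : T -> R} {c : \bar R} (t0 : T) :
  measurable_fun setT u -> measurable_fun setT v ->
  (exists M, forall t, `|u t| <= M) -> (exists M, forall t, `|v t| <= M) ->
  (forall t, ((`|u t - v t|)%:E <= c)%E) ->
  ((`|fine (\int[mu]_t (u t)%:E) - fine (\int[mu]_t (v t)%:E)|)%:E <= c)%E.
Proof.
move=> mu_ mv bu bv hc.
have iu := integrable_bounded mu_ bu; have iv := integrable_bounded mv bv.
case: c hc => [r| |] hc; [|exact: leey|by have := hc t0; rewrite leNgt ltNye].
have fu : (\int[mu]_t (u t)%:E)%E \is a fin_num by exact: integrable_fin_num.
have fv : (\int[mu]_t (v t)%:E)%E \is a fin_num by exact: integrable_fin_num.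
rewrite -abse_EFin EFinB !fineK // -integralB_EFin //.
have mB : measurable_fun setT (fun t => (u t)%:E - (v t)%:E)%E.
  by apply: emeasurable_funB; exact/measurable_EFinP.
apply: (le_trans (le_abse_integral _ _ mB)) => //.
have r0 : (0 <= r%:E)%E by apply: le_trans (hc t0); rewrite lee_fin.
rewrite -[leRHS]mule1 -mu1; apply: integral_le_bound => //.
by apply: aeW => t _; rewrite -EFinB abse_EFin.
Qed.

End bounded_integral.

Definition upd {disp} {S : porderType disp} {E : Type} (y : S) (w : S -> E) (e : E) :
  S -> E := fun z => if z == y then e else w z.

Definition fslice {disp} {S : porderType disp} {E R : Type} (y : S) (f : (S -> E) -> R)
  (xi s : S -> E) : R := f (upd y xi (s y)).

Section oscillation.
Context {disp : Order.disp_t} {S : porderType disp} {E : pointedType} {R : realType}.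
Implicit Types (x : S) (g : (S -> E) -> R).

Lemma osc_ge {x} g {xi eta} : agree_off x xi eta -> ((`|g xi - g eta|)%:E <= osc x g)%E.
Proof. by move=> ag; apply: ereal_sup_ubound; exists xi, eta. Qed.

Lemma osc_le x g (c : \bar R) :
  (forall xi eta, agree_off x xi eta -> ((`|g xi - g eta|)%:E <= c)%E) ->
  (osc x g <= c)%E.
Proof. by move=> hc; apply: ge_ereal_sup => r [xi [eta [ag ->]]]; exact: hc. Qed.

Lemma osc_ge0 x g : (0 <= osc x g)%E.
Proof.
have ag : agree_off x (point : S -> E) point by [].
by apply: le_trans (osc_ge g ag); rewrite subrr normr0.
Qed.

End oscillation.

Section single_site_kernel.
Context {disp : Order.disp_t} {S : porderType disp} {E : pointedType} {R : realType}.
Context {gamma : @kernel_family disp S E R} {y : S}.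
Context (Hgamma : POS gamma) (cE : countable [set: E]) (cS : countable [set: S]).

Lemma proper_kernel_set1 : proper_oriented_kernel (gamma [set y]).
Proof. exact: Hgamma.1 _ (timebox_set1 y). Qed.

Lemma kact_coord_past (k : E -> R) (w w' : S -> E) :
  (exists M, forall e, `|k e| <= M) -> (forall z, (z < y)%O -> w z = w' z) ->
  kact gamma [set y] (fun s => k (s y)) w = kact gamma [set y] (fun s => k (s y)) w'.
Proof.
move=> [M kM] ww'; have [P1 [_ [Pc _]]] := proper_kernel_set1.
pose phi : FT (~` future [set y]) -> FT [set y] := @id (S -> E).
have mphi : measurable_fun setT phi.
  move=> _ Y mY; rewrite setTI; apply: (FT_measurableS _ mY) => z /= ->.
  exact: set1_not_future.
have mk : measurable_fun setT (fun s : FT [set y] => (k (s y))%:E).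
  exact: (measurable_fun_coord (EFin \o k) cE).
(* the integrand is F_{y}-measurable, and on F_{y} the kernel only sees w on y_-, by (c) *)
have push v : (\int[gamma [set y] v]_s (k (s y))%:E =
    \int[pushforward (gamma [set y] v) phi]_s (k (s y))%:E)%E.
  rewrite (integral_pushforward mphi mk) ?preimage_setT //.
  apply: integrable_bounded; [exact: P1 | |by exists M].
  exact: (measurable_fun_coord k cE (@set1_not_future _ _ y)).
rewrite /kact !push; congr fine; apply: eq_measure_integral => A mA _.
apply: (measurable_fun_agree_on (@emeasurable_set1 R) (Pc _ mA)).
by move=> z [_ [b /= -> zy]]; apply: ww'.
Qed.

Context {f : (S -> E) -> R} (fb : bounded_cfg f)
  (mf : measurable_fun [set: FT (~` future [set y])] (f : FT (~` future [set y]) -> R)).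

Lemma measurable_fslice {U} xi : U y ->
  measurable_fun [set: FT U] (fslice y f xi : FT U -> R).
Proof. exact: (measurable_fun_coord (fun e => f (upd y xi e)) cE). Qed.

Lemma bounded_fslice xi : bounded_cfg (fslice y f xi).
Proof. by have [M fM] := fb; exists M => s; exact: fM. Qed.

Lemma kact_fslice_agree_off {x xi w w'} : ~ (x < y)%O -> agree_off x w w' ->
  kact gamma [set y] (fslice y f xi) w = kact gamma [set y] (fslice y f xi) w'.
Proof.
move=> nxy ww'; apply: (kact_coord_past (fun e => f (upd y xi e))).
  by have [M fM] := fb; exists M => e; exact: fM.
by move=> z zy; apply: ww'; apply: contra_notN nxy => /eqP <-.
Qed.

Lemma fslice_agree_off {w w'} : agree_off y w w' -> fslice y f w = fslice y f w'.
Proof.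
move=> ww'; apply/funext => s; congr f; apply/funext => z; rewrite /upd.
by case: eqVneq => // /ww'.
Qed.

Lemma osc_fslice_y xi : (osc y (fslice y f xi) <= osc y f)%E.
Proof. by apply: osc_le => w w' ww'; apply: osc_ge => z zy; rewrite /upd (negbTE zy). Qed.

Lemma kact_fslice w : kact gamma [set y] f w = kact gamma [set y] (fslice y f w) w.
Proof.
have [P1 [_ [_ Pd]]] := proper_kernel_set1.
rewrite /kact; congr fine; apply: ae_eq_integral => //.
- exact/measurable_EFinP.
- by apply/measurable_EFinP; apply: measurable_fslice; exact: set1_not_future.
(* gamma_y(., w) charges only configurations agreeing with w on past and outer time, by (d) *)
pose N := \bigcup_(z in past [set y] `|` outer [set y]) [set s : S -> E | s z <> w z].
have negN : (gamma [set y] w).-negligible N.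
  apply: negligible_countable_bigcup => // z Pz.
  have mC : measurable ([set s : S -> E | s z = w z] : set (FT (~` future [set y]))).
    exact: cylinder_measurable _ (past_outer_not_future Pz).
  exists (~` [set s : S -> E | s z = w z]); split => //; first exact: measurableC.
  rewrite -(setTD [set s : S -> E | s z = w z]) measureD //=; last by rewrite P1 ltry.
  by rewrite setTI P1 (Pd _ (cylinder_measurable _ Pz)) indicE mem_set // subee.
apply: (negligibleS _ negN) => s /= hs; apply: contrapT => nN; apply: hs => _.
congr EFin; apply: (measurable_fun_agree_on (@measurable_set1 R) mf) => z Uz.
have [->|zy] := eqVneq z y; first by rewrite /upd eqxx.
rewrite /upd (negbTE zy); apply: contrapT => szw; apply: nN; exists z => //.
by case: (not_future_set1 Uz) => // /eqP; rewrite (negbTE zy).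
Qed.

Lemma dist_kact_fslice_le x w w' v : agree_off x w w' ->
  ((`|kact gamma [set y] (fslice y f w) v - kact gamma [set y] (fslice y f w') v|)%:E
    <= osc x f)%E.
Proof.
have [P1 _] := proper_kernel_set1.
have nfy : (~` future [set y]) y := @set1_not_future _ _ y.
move=> ww'; apply: (dist_fine_integral_le (P1 v) v (measurable_fslice _ nfy)
  (measurable_fslice _ nfy) (bounded_fslice _) (bounded_fslice _)) => s.
by apply: osc_ge => z zx; rewrite /upd; case: ifP => // _; exact: ww'.
Qed.

Lemma osc_kact_le x (c1 c2 : \bar R) :
  (forall w w', agree_off x w w' ->
    ((`|kact gamma [set y] (fslice y f w) w
        - kact gamma [set y] (fslice y f w') w|)%:E <= c1)%E) ->
  (forall w w', agree_off x w w' ->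
    ((`|kact gamma [set y] (fslice y f w') w
        - kact gamma [set y] (fslice y f w') w'|)%:E <= c2)%E) ->
  (osc x (kact gamma [set y] f) <= c1 + c2)%E.
Proof.
move=> h1 h2; apply: osc_le => w w' ww'.
apply: le_trans (leeD (h1 _ _ ww') (h2 _ _ ww')).
by rewrite -EFinD lee_fin !kact_fslice ler_distD.
Qed.

End single_site_kernel.

Theorem mainTheorem20 (disp : Order.disp_t) (S : porderType disp)
  (E : pointedType) (R : realType)
  (HS : @standing_assumptions disp S) (HE : countable [set: E])
  (gamma : @kernel_family disp S E R) (Hgamma : POS gamma)
  (alpha : S -> S -> R) (Halpha : dust_rate gamma alpha)
  (y x : S) (Hx : ~ (y < x)%O)
  (f : (S -> E) -> R) (Hfb : bounded_cfg f)
  (Hfm : measurable_fun [set: FT (~` future [set y])] (f : FT (~` future [set y]) -> R)) :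
  (x = y -> osc x (kact gamma [set y] f) = 0%E) /\
  (outer [set y] x -> (osc x (kact gamma [set y] f) <= osc x f)%E) /\
  ((x < y)%O ->
     (osc x (kact gamma [set y] f) <= osc x f + osc y f * (alpha y x)%:E)%E).
Proof.
have osc_le_split := osc_kact_le Hgamma HE HS.1 Hfm.
split; [move=> xy | split; [move=> Ox | move=> xy]].
- apply/eqP; rewrite eq_le osc_ge0 andbT -[0%E]adde0; subst x.
  apply: osc_le_split => w w' ww'.
    by rewrite (fslice_agree_off ww') subrr normr0.
  by rewrite (kact_fslice_agree_off Hgamma HE Hfb Hx ww') subrr normr0.
- have nxy : ~ (x < y)%O by move=> xy; have := Ox y erefl; rewrite lt_comparable.
  rewrite -[osc x f]adde0; apply: osc_le_split => w w' ww'.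
    exact: dist_kact_fslice_le.
  by rewrite (kact_fslice_agree_off Hgamma HE Hfb nxy ww') subrr normr0.
- apply: osc_le_split => w w' ww'; first exact: dist_kact_fslice_le.
  have [alpha_ge0 [_ dust]] := Halpha.
  apply: le_trans (osc_ge _ ww') _.
  apply: le_trans (dust y x xy _ (bounded_fslice Hfb _) (measurable_fslice HE _ erefl)) _.
  by apply: lee_wpmul2r; [rewrite lee_fin alpha_ge0 // ltW | exact: osc_fslice_y].
Qed.
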